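(* Let $N\ge 1$ be an integer, $\Omega>0$, $\bar\gamma>0$, and consider the high-SNR asymptotic delay-tolerant throughput $$\tilde\rho(\tau)=\frac{1-\tau}{\ln 2}\left[2\psi(N)+\ln\bar\gamma+2\ln\Omega-\ln\!\left(\frac{1-\tau}{\tau}\right)\right],\qquad \tau\in(0,1).$$ Then the throughput-optimal energy harvesting time, i.e. the maximizer of $\tilde\rho$ over $(0,1)$, is $$\tau_{tol}^*=\frac{1}{1+W\!\left(\bar\gamma\,\Omega^2 e^{2\psi(N)-1}\right)}.$$ *)

From Stdlib Require Import Reals ClassicalEpsilon.
From Coquelicot Require Import Coquelicot.
Open Scope R_scope.

Fixpoint harmonic (n : nat) : R :=
  match n with
  | O => 0
  | S m => harmonic m + / INR (S m)
  end.

Definition EulerGamma : R :=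
  real (Lim_seq (fun n => harmonic n - ln (INR n))).

Definition digamma_nat (N : nat) : R := - EulerGamma + harmonic (N - 1).

(* Principal branch W_0 of the Lambert W function: the unique w >= -1
   with w * e^w = x (well defined for x >= -1/e; used here for x > 0). *)
Definition LambertW (x : R) : R :=
  epsilon (inhabits 0) (fun w => -1 <= w /\ w * exp w = x).

Definition rho_tilde (N : nat) (Omega gbar tau : R) : R :=
  (1 - tau) / ln 2 *
  (2 * digamma_nat N + ln gbar + 2 * ln Omega - ln ((1 - tau) / tau)).

(** Write [s = (1 - tau) / tau] for the odds of not harvesting, so that
    [tau = 1 / (1 + s)] ranges over [(0,1)] as [s] ranges over [(0,oo)], and
    [ln 2 * rho_tilde = s / (1 + s) * (C - ln s)] for the constant
    [C = 2 psi(N) + ln gbar + 2 ln Omega].  If [w e^w = e^(C-1)], i.e.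
    [C = ln w + w + 1], then [w (1 + s) - s (C - ln s) = s (w/s - 1 - ln (w/s))],
    which is positive unless [s = w] by [ln t < t - 1] for [t <> 1]. *)

From Stdlib Require Import Reals Lra ClassicalEpsilon.
Open Scope R_scope.

Lemma ln_lt_sub_1 (t : R) : 0 < t -> t <> 1 -> ln t < t - 1.
Proof.
  intros Ht Ht1.
  assert (Hln : ln t <> 0).
  { intro H0. apply Ht1. rewrite <- (exp_ln t Ht), H0. apply exp_0. }
  pose proof (exp_ineq1 _ Hln) as Hexp.
  rewrite exp_ln in Hexp by exact Ht. lra.
Qed.

Lemma LambertW_pos_spec (x : R) :
  0 < x -> 0 < LambertW x /\ LambertW x * exp (LambertW x) = x.
Proof.
  intros Hx.
  assert (Hex : exists w, -1 <= w /\ w * exp w = x).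
  { destruct (IVT (fun w => w * exp w - x) 0 x) as [w [Hw Hwx]].
    - intros a. apply continuity_pt_minus; [apply continuity_pt_mult|].
      + apply derivable_continuous_pt, derivable_pt_id.
      + apply derivable_continuous_pt, derivable_pt_exp.
      + apply continuity_pt_const. intros u v; reflexivity.
    - exact Hx.
    - rewrite exp_0. lra.
    - pose proof (exp_ineq1 x ltac:(lra)). nra.
    - exists w. split; lra. }
  unfold LambertW.
  destruct (epsilon_spec (inhabits 0) (fun w => -1 <= w /\ w * exp w = x) Hex)
    as [Hge Hw].
  set (w := epsilon _ _) in *.
  split; [|exact Hw].
  destruct (Rle_or_lt w 0) as [Hw0|Hw0]; [|exact Hw0].
  pose proof (exp_pos w). nra.
Qed.

Lemma ln_LambertW (x : R) : 0 < x -> ln (LambertW x) + LambertW x = ln x.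
Proof.
  intros Hx. destruct (LambertW_pos_spec x Hx) as [Hw Hwe].
  rewrite <- Hwe at 3. rewrite ln_mult, ln_exp; [reflexivity | exact Hw | apply exp_pos].
Qed.

Lemma odds_objective_lt (w s : R) :
  0 < w -> 0 < s -> s <> w -> s / (1 + s) * (ln w + w + 1 - ln s) < w.
Proof.
  intros Hw Hs Hsw.
  assert (Hratio : ln (w / s) < w / s - 1).
  { apply ln_lt_sub_1; [apply Rdiv_lt_0_compat; lra|].
    intro E. apply Hsw. apply (Rmult_eq_compat_r s) in E.
    unfold Rdiv in E. rewrite Rmult_assoc, Rinv_l in E by lra. lra. }
  unfold Rdiv at 1 in Hratio.
  rewrite ln_mult, ln_Rinv in Hratio by (try apply Rinv_0_lt_compat; lra).
  assert (Hgap : s * (ln w - ln s) < w - s).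
  { replace (w - s) with (s * (w / s - 1)) by (field; lra).
    apply Rmult_lt_compat_l; lra. }
  apply (Rmult_lt_reg_r (1 + s)); [lra|].
  replace (s / (1 + s) * (ln w + w + 1 - ln s) * (1 + s))
    with (s * (ln w + w + 1 - ln s)) by (field; lra).
  nra.
Qed.

Lemma rho_tilde_odds (N : nat) (Omega gbar s : R) :
  0 < s ->
  rho_tilde N Omega gbar (1 / (1 + s)) =
  s / (1 + s) * (2 * digamma_nat N + ln gbar + 2 * ln Omega - ln s) / ln 2.
Proof.
  intros Hs. unfold rho_tilde.
  replace ((1 - 1 / (1 + s)) / (1 / (1 + s))) with s by (field; lra).
  replace (1 - 1 / (1 + s)) with (s / (1 + s)) by (field; lra).
  unfold Rdiv. ring.
Qed.

Lemma ln_snr_constant (N : nat) (Omega gbar : R) :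
  0 < Omega -> 0 < gbar ->
  ln (gbar * Omega ^ 2 * exp (2 * digamma_nat N - 1)) =
  2 * digamma_nat N + ln gbar + 2 * ln Omega - 1.
Proof.
  intros HOmega Hgbar.
  pose proof (pow_lt Omega 2 HOmega) as HOmega2.
  rewrite ln_mult, ln_mult, ln_exp, ln_pow;
    [simpl; lra | exact HOmega | exact Hgbar | exact HOmega2
    | apply Rmult_lt_0_compat; assumption | apply exp_pos].
Qed.

Theorem proposition2 (N : nat) (Omega gbar : R)
  (HN : (1 <= N)%nat) (HOmega : 0 < Omega) (Hgbar : 0 < gbar) :
  let tau_opt :=
    1 / (1 + LambertW (gbar * Omega ^ 2 * exp (2 * digamma_nat N - 1))) in
  0 < tau_opt < 1 /\
  forall tau : R, 0 < tau < 1 -> tau <> tau_opt ->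
    rho_tilde N Omega gbar tau < rho_tilde N Omega gbar tau_opt.
Proof.
  intros tau_opt.
  set (x := gbar * Omega ^ 2 * exp (2 * digamma_nat N - 1)) in tau_opt.
  assert (Hx : 0 < x).
  { pose proof (pow_lt Omega 2 HOmega). pose proof (exp_pos (2 * digamma_nat N - 1)).
    unfold x. apply Rmult_lt_0_compat; [apply Rmult_lt_0_compat|]; assumption. }
  assert (HC : ln (LambertW x) + LambertW x + 1 =
               2 * digamma_nat N + ln gbar + 2 * ln Omega).
  { rewrite ln_LambertW by exact Hx. unfold x. rewrite ln_snr_constant by assumption. lra. }
  destruct (LambertW_pos_spec x Hx) as [Hw _].
  set (w := LambertW x) in *.
  split.
  { unfold tau_opt. split; [apply Rdiv_lt_0_compat; lra|].
    apply (Rmult_lt_reg_r (1 + w)); [lra|]. field_simplify; lra. }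
  intros tau Htau Hne.
  set (s := (1 - tau) / tau).
  assert (Hs : 0 < s) by (apply Rdiv_lt_0_compat; lra).
  assert (Htau_s : tau = 1 / (1 + s)) by (unfold s; field; lra).
  assert (Hsw : s <> w) by (intro E; apply Hne; rewrite Htau_s, E; reflexivity).
  unfold tau_opt. rewrite Htau_s, !rho_tilde_odds by assumption.
  assert (Hln2 : 0 < ln 2) by (rewrite <- ln_1; apply ln_increasing; lra).
  apply Rmult_lt_compat_r; [apply Rinv_0_lt_compat; exact Hln2|].
  replace (2 * digamma_nat N + ln gbar + 2 * ln Omega) with (ln w + w + 1) by lra.
  replace (w / (1 + w) * (ln w + w + 1 - ln w)) with w by (field; lra).
  exact (odds_objective_lt w s Hw Hs Hsw).
Qed.
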